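(* Let $H$ be a real Hilbert space, let $D\subseteq H$ be a nonempty closed convex set, let $I$ be a countable set of positive integers, and let $(T_i)_{i\in I}$ be firmly nonexpansive operators $T_i:D\to D$ with $F:=\bigcap_{i\in I}\mathrm{Fix}(T_i)\neq\emptyset$. Let $(\Omega,w)\in\mathcal{M}_\infty$ and let $T:=\sum_{t\in\Omega}w(t)T[t]$ (the series converging pointwise in $H$). Then $\mathrm{Fix}(T)=\bigcap_{i\in I}\mathrm{Fix}(T_i)$.
   Context: An operator $T:D\to H$ is firmly nonexpansive if $\|T(x)-T(y)\|^2\le\langle x-y,T(x)-T(y)\rangle$ for all $x,y\in D$. $\mathrm{Fix}(T)=\{x\in D:T(x)=x\}$. An index vector is a finite tuple $t=(t_1,\dots,t_q)$ with each $t_\ell\in I$; the string operator is $T[t]:=T_{t_q}T_{t_{q-1}}\cdots T_{t_1}$. A countable set $\Omega$ of index vectors is fit if every $i\in I$ appears as a component of some $t\in\Omega$. $\mathcal{M}_\infty$ denotes the collection of all pairs $(\Omega,w)$ where $\Omega$ is a fit countable set of index vectors and $w:\Omega\to(0,1)$ satisfies $\sum_{t\in\Omega}w(t)=1$. *)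

From HB Require Import structures.
From mathcomp Require Import all_boot all_order all_algebra.
From mathcomp Require Import all_classical all_reals all_analysis.
From mathcomp Require Export finmap.
Set Implicit Arguments. Unset Strict Implicit. Unset Printing Implicit Defensive.
Import Order.TTheory GRing.Theory Num.Theory.
Import numFieldNormedType.Exports.
Local Open Scope classical_set_scope.
Local Open Scope ring_scope.

Section Defs.
Variable R : realType.

(* ip is a real inner product on H inducing the norm of H; together with
   completeness of H this makes H a real Hilbert space. *)
Definition is_inner_product (H : normedModType R) (ip : H -> H -> R) : Prop :=
  [/\ forall x y, ip x y = ip y x,
      forall x y z, ip (x + y) z = ip x z + ip y z,
      forall (a : R) x y, ip (a *: x) y = a * ip x y &
      forall x, ip x x = `|x| ^+ 2].

Definition convex_set_in (H : normedModType R) (D : set H) : Prop :=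
  forall x y (l : R), D x -> D y -> 0 <= l -> l <= 1 ->
    D (l *: x + (1 - l) *: y).

Definition firmly_nonexpansive (H : normedModType R) (ip : H -> H -> R)
  (D : set H) (T : H -> H) : Prop :=
  forall x y, D x -> D y -> `|T x - T y| ^+ 2 <= ip (x - y) (T x - T y).

Definition Fix (H : normedModType R) (D : set H) (T : H -> H) : set H :=
  [set x | D x /\ T x = x].

(* unconditional (net over finite subsets) summation of f over Om, with sum s *)
Definition has_sum (K : choiceType) (H : normedModType R) (Om : set K)
  (f : K -> H) (s : H) : Prop :=
  forall e : R, 0 < e -> exists F0 : {fset K}, [set` F0] `<=` Om /\
    forall F : {fset K}, [set` F0] `<=` [set` F] -> [set` F] `<=` Om ->
      `|\sum_(t <- F) f t - s| < e.

End Defs.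

Definition index_vector (I : set nat) (t : seq nat) : Prop :=
  t <> [::] /\ forall i, i \in t -> I i.

(* string operator T[t] := T_{t_q} ... T_{t_1} (T_{t_1} applied first) *)
Definition string_op (H : Type) (T : nat -> H -> H) (t : seq nat) (x : H) : H :=
  foldl (fun y i => T i y) x t.

Definition fit (I : set nat) (Om : set (seq nat)) : Prop :=
  forall i, I i -> exists t, Om t /\ i \in t.

Definition M_infty (R : realType) (I : set nat) (Om : set (seq nat))
  (w : seq nat -> R) : Prop :=
  [/\ Om `<=` index_vector I, fit I Om,
      (forall t, Om t -> 0 < w t /\ w t < 1) &
      has_sum Om (fun t => w t : R^o) 1].

(* Let z be a common fixed point of the firmly nonexpansive maps T_i.  Each
   step of T_i moves a point y closer to z by at least |T_i y - y|, so every
   string T[t] is quasi-nonexpansive towards z, and strictly decreases the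
   distance to z as soon as one of its factors moves its argument.

   If x is a common fixed point, every string fixes x and, since the weights
   sum to 1, T x = x.  Conversely, if T x = x, pairing the series defining T x
   with u := x - z gives  sum_t w(t) <T[t]x - z, u> = |u|^2,  while each term
   is at most w(t) |u|^2; if some T_i moved x, the term of a string containing
   i (there is one since Om is fit) would be strictly smaller, which is
   impossible. *)

From HB Require Import structures.
From mathcomp Require Import all_boot all_order all_algebra.
From mathcomp Require Import all_classical all_reals all_analysis.
From mathcomp Require Import ring lra.
Set Implicit Arguments. Unset Strict Implicit. Unset Printing Implicit Defensive.
Import Order.TTheory GRing.Theory Num.Theory.
Import numFieldNormedType.Exports.
Local Open Scope classical_set_scope.
Local Open Scope ring_scope.

Section HasSum.
Variables (R : realType) (K : choiceType).
Implicit Types (Om : set K).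

Lemma subset_fsetU Om (F1 F2 : {fset K}) :
  [set` F1] `<=` Om -> [set` F2] `<=` Om -> [set` (F1 `|` F2)%fset] `<=` Om.
Proof. by move=> s1 s2 t /=; rewrite in_fsetU => /orP[/s1|/s2]. Qed.

Lemma subset_fsetUl (F1 F2 : {fset K}) : [set` F1] `<=` [set` (F1 `|` F2)%fset].
Proof. by move=> t /= tF; rewrite in_fsetU tF. Qed.

Lemma subset_fsetUr (F1 F2 : {fset K}) : [set` F2] `<=` [set` (F1 `|` F2)%fset].
Proof. by move=> t /= tF; rewrite in_fsetU tF orbT. Qed.

Lemma has_sum_ext {H : normedModType R} Om (f g : K -> H) s :
  (forall t, Om t -> f t = g t) -> has_sum Om f s -> has_sum Om g s.
Proof.
move=> fg hf e e0; have [F0 [F0Om HF0]] := hf e e0.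
exists F0; split => // F F0F FOm.
have <- : \sum_(t <- F) f t = \sum_(t <- F) g t.
  by apply: eq_big_seq => t tF; apply: fg; apply: FOm.
exact: HF0.
Qed.

Lemma has_sum_sub {H : normedModType R} Om (f g : K -> H) s r :
  has_sum Om f s -> has_sum Om g r -> has_sum Om (fun t => f t - g t) (s - r).
Proof.
move=> hf hg e e0; have e2 : 0 < e / 2 by rewrite divr_gt0.
have [F1 [F1Om HF1]] := hf _ e2; have [F2 [F2Om HF2]] := hg _ e2.
exists (F1 `|` F2)%fset; split=> [|F sub FOm]; first exact: subset_fsetU.
have h1 := HF1 F (subset_trans (@subset_fsetUl _ _) sub) FOm.
have h2 := HF2 F (subset_trans (@subset_fsetUr _ _) sub) FOm.
rewrite sumrB.
have -> : forall a b c d : H, a - b - (c - d) = (a - c) - (b - d).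
  by move=> a b c d; rewrite !opprD !opprK !addrA; congr (_ + _); exact: addrAC.
by apply: le_lt_trans (ler_normB _ _) _; lra.
Qed.

Lemma has_sum_bounded_additive {H G : normedModType R} Om (f : K -> H) s
    (phi : H -> G) (C : R) :
  {morph phi : x y / x + y} -> (forall x, `|phi x| <= C * `|x|) ->
  has_sum Om f s -> has_sum Om (fun t => phi (f t)) (phi s).
Proof.
move=> phiD phiC hf e e0.
have C1 : 0 < `|C| + 1 by rewrite ltr_wpDl.
have eps0 : 0 < e / (`|C| + 1) by rewrite divr_gt0.
have [F0 [F0Om HF0]] := hf _ eps0; exists F0; split => // F F0F FOm.
have phi0 : phi 0 = 0 by apply: (addrI (phi 0)); rewrite -phiD !addr0.
rewrite -(big_morph phi phiD phi0).
have -> : phi (\sum_(t <- F) f t) - phi s = phi (\sum_(t <- F) f t - s).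
  by rewrite -{1}(subrK s (\sum_(t <- F) f t)) phiD addrK.
apply: le_lt_trans (phiC _) _.
have hF := HF0 F F0F FOm; set d := `|_ - s| in hF *.
have dC : C * d <= `|C| * d.
  by apply: ler_wpM2r; [exact: normr_ge0 | exact: ler_norm].
have : `|C| * d <= `|C| * (e / (`|C| + 1)).
  by apply: ler_wpM2l; [exact: normr_ge0 | exact: ltW].
have -> : `|C| * (e / (`|C| + 1)) = e - e / (`|C| + 1).
  by field; rewrite gt_eqF.
lra.
Qed.

Lemma has_sum_scale {H : normedModType R} Om (w : K -> R^o) c (v : H) :
  has_sum Om w c -> has_sum Om (fun t => w t *: v) (c *: v).
Proof.
apply: (@has_sum_bounded_additive _ _ Om w c (fun a : R^o => a *: v) `|v|).
- by move=> a b; rewrite scalerDl.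
- by move=> a; rewrite normrZ mulrC.
Qed.

Lemma has_sum0 {H : normedModType R} Om (c : H) :
  has_sum Om (fun=> 0) c -> c = 0.
Proof.
move=> h; apply/normr0_eq0/eqP; rewrite eq_le normr_ge0 andbT.
apply/ler_addgt0Pr => e e0; have [F0 [F0Om HF0]] := h e e0.
have := HF0 F0 (@subset_refl _ _) F0Om; rewrite big1 // sub0r normrN add0r.
exact: ltW.
Qed.

Lemma has_sum_unique {H : normedModType R} Om (f : K -> H) s s' :
  has_sum Om f s -> has_sum Om f s' -> s = s'.
Proof.
move=> hs hs'; apply/eqP; rewrite -subr_eq0; apply/eqP/(@has_sum0 _ Om).
apply: (@has_sum_ext _ Om (fun t => f t - f t)) => [t _|].
  exact: subrr.
exact: has_sum_sub.
Qed.

Lemma has_sum_nonempty {H : normedModType R} Om (f : K -> H) s :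
  has_sum Om f s -> s != 0 -> exists t, Om t.
Proof.
move=> hf s0; have [|F0 [F0Om HF0]] := hf `|s|; first by rewrite normr_gt0.
case E : (F0 : seq K) => [|t r]; last first.
  by exists t; apply: F0Om; have : t \in (F0 : seq K) by rewrite E mem_head.
have := HF0 F0 (@subset_refl _ _) F0Om; rewrite E big_nil sub0r normrN.
by rewrite ltxx.
Qed.

Lemma has_sum_ge_term Om (g : K -> R) c t0 :
  has_sum Om (fun t => g t : R^o) c -> (forall t, Om t -> 0 <= g t) -> Om t0 ->
  g t0 <= c.
Proof.
move=> hg g0 Omt0; apply/ler_addgt0Pr => e e0.
have [F0 [F0Om HF0]] := hg e e0.
pose F := (F0 `|` [fset t0])%fset.
have FOm : [set` F] `<=` Om.
  by apply: subset_fsetU => // t /=; rewrite inE => /eqP ->.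
have t0F : t0 \in F by rewrite !inE eqxx orbT.
have := HF0 F (@subset_fsetUl _ _) FOm.
rewrite (bigD1_seq t0) ?fset_uniq //= => hF.
have : 0 <= \sum_(t <- F | t != t0) g t.
  by rewrite big_seq_cond sumr_ge0 // => t /andP[tF _]; apply: g0; apply: FOm.
have := ler_norm (g t0 + \sum_(t <- F | t != t0) g t - c).
lra.
Qed.

End HasSum.

Section InnerProduct.
Variables (R : realType) (H : normedModType R) (ip : H -> H -> R).
Hypothesis Hip : is_inner_product ip.

Lemma ipC x y : ip x y = ip y x. Proof. by case: Hip. Qed.
Lemma ipDl x y z : ip (x + y) z = ip x z + ip y z. Proof. by case: Hip. Qed.
Lemma ipZl a x y : ip (a *: x) y = a * ip x y. Proof. by case: Hip. Qed.
Lemma ipxx x : ip x x = `|x| ^+ 2. Proof. by case: Hip. Qed.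

Lemma ipDr x y z : ip x (y + z) = ip x y + ip x z.
Proof. by rewrite ipC ipDl ipC (ipC z). Qed.

Lemma ipNl x y : ip (- x) y = - ip x y.
Proof. by rewrite -scaleN1r ipZl mulN1r. Qed.

Lemma ipNr x y : ip x (- y) = - ip x y.
Proof. by rewrite ipC ipNl ipC. Qed.

Lemma norm_sqrD p q : `|p + q| ^+ 2 = `|p| ^+ 2 + 2 * ip p q + `|q| ^+ 2.
Proof. by rewrite -!ipxx ipDl !ipDr (ipC q p); lra. Qed.

(* Young's inequality <p,q> <= (|p|^2 + |q|^2)/2, from 0 <= |p - q|^2. *)
Lemma ip_le_half p q : ip p q <= (`|p| ^+ 2 + `|q| ^+ 2) / 2.
Proof.
have := norm_sqrD p (- q); rewrite normrN ipNr.
have := exprn_ge0 2 (normr_ge0 (p - q)); lra.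
Qed.

(* The Cauchy-Schwarz inequality, derived from the triangle inequality. *)
Lemma ip_CauchySchwarz p q : `|ip p q| <= `|p| * `|q|.
Proof.
have upper x : ip x q <= `|x| * `|q|.
  have : `|x + q| ^+ 2 <= (`|x| + `|q|) ^+ 2.
    by rewrite lerXn2r ?nnegrE ?addr_ge0 ?ler_normD.
  rewrite norm_sqrD; nra.
rewrite ler_norml upper andbT.
by have := upper (- p); rewrite ipNl normrN; lra.
Qed.

Lemma has_sum_ip (K : choiceType) (Om : set K) (f : K -> H) s u :
  has_sum Om f s -> has_sum Om (fun t => ip (f t) u : R^o) (ip s u).
Proof.
apply: (@has_sum_bounded_additive _ _ _ _ Om f s (fun x => ip x u : R^o) `|u|).
- by move=> x y; rewrite ipDl.
- by move=> x; rewrite mulrC; apply: ip_CauchySchwarz.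
Qed.

Lemma fne_descent (D : set H) (S : H -> H) y z :
  firmly_nonexpansive ip D S -> D y -> D z -> S z = z ->
  `|S y - z| ^+ 2 + `|S y - y| ^+ 2 <= `|y - z| ^+ 2.
Proof.
move=> Sfne Dy Dz Sz; have := Sfne y z Dy Dz; rewrite Sz.
have -> : y - z = (y - S y) + (S y - z) by rewrite addrA subrK.
rewrite ipDl ipxx (norm_sqrD (y - S y)) -(opprB (S y) y) normrN; lra.
Qed.

End InnerProduct.

Lemma string_op_cons (X : Type) (T : nat -> X -> X) j t x :
  string_op T (j :: t) x = string_op T t (T j x).
Proof. by []. Qed.

Lemma string_op_fix (X : Type) (T : nat -> X -> X) t x :
  (forall j, j \in t -> T j x = x) -> string_op T t x = x.
Proof.
elim: t => [//|j t IH] fixx; rewrite string_op_cons fixx ?mem_head //.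
by apply: IH => k kt; apply: fixx; rewrite in_cons kt orbT.
Qed.

Section Strings.
Variables (R : realType) (H : normedModType R) (ip : H -> H -> R).
Hypothesis Hip : is_inner_product ip.
Variables (D : set H) (I : set nat) (Tf : nat -> H -> H) (z : H).
Hypothesis TD : forall i, I i -> forall x, D x -> D (Tf i x).
Hypothesis Tfne : forall i, I i -> firmly_nonexpansive ip D (Tf i).
Hypothesis Dz : D z.
Hypothesis Tz : forall i, I i -> Tf i z = z.

Lemma string_dist_le t y : D y -> (forall j, j \in t -> I j) ->
  `|string_op Tf t y - z| ^+ 2 <= `|y - z| ^+ 2.
Proof.
elim: t y => [|j t IH] y Dy tI; first exact: lexx.
have Ij : I j by apply: tI; rewrite mem_head.
have tI' k : k \in t -> I k by move=> kt; apply: tI; rewrite in_cons kt orbT.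
rewrite string_op_cons; apply: le_trans (IH _ (TD Ij Dy) tI') _.
have := fne_descent Hip (Tfne Ij) Dy Dz (Tz Ij).
have := exprn_ge0 2 (normr_ge0 (Tf j y - y)); lra.
Qed.

Lemma string_dist_lt t y j : D y -> (forall k, k \in t -> I k) ->
  j \in t -> Tf j y != y -> `|string_op Tf t y - z| ^+ 2 < `|y - z| ^+ 2.
Proof.
elim: t y => [//|k t IH] y Dy tI jt moved.
have Ik : I k by apply: tI; rewrite mem_head.
have tI' l : l \in t -> I l by move=> lt; apply: tI; rewrite in_cons lt orbT.
rewrite string_op_cons; have [ky|kmoved] := eqVneq (Tf k y) y.
- rewrite ky; apply: IH => //.
  move: jt; rewrite in_cons => /orP[/eqP jk|//].
  by move: moved; rewrite jk ky eqxx.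
- apply: le_lt_trans (string_dist_le (TD Ik Dy) tI') _.
  have := fne_descent Hip (Tfne Ik) Dy Dz (Tz Ik).
  have : 0 < `|Tf k y - y| ^+ 2 by rewrite exprn_gt0 // normr_gt0 subr_eq0.
  lra.
Qed.

End Strings.

Section AveragedStrings.
Variables (R : realType) (H : normedModType R) (ip : H -> H -> R).
Hypothesis Hip : is_inner_product ip.
Variables (D : set H) (I : set nat) (Tf : nat -> H -> H).
Hypothesis TD : forall i, I i -> forall x, D x -> D (Tf i x).
Hypothesis Tfne : forall i, I i -> firmly_nonexpansive ip D (Tf i).
Variables (Om : set (seq nat)) (w : seq nat -> R) (T : H -> H).
Hypothesis Mw : M_infty I Om w.
Hypothesis Tdef :
  forall x, D x -> has_sum Om (fun t => w t *: string_op Tf t x) (T x).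

Lemma Om_indices t : Om t -> forall j, j \in t -> I j.
Proof. by case: Mw => Mind _ _ _ /Mind []. Qed.

(* Common fixed points of the T_i are fixed by T: every string fixes them and
   the weights sum to 1. *)
Lemma common_fix_averaged x : (\bigcap_(i in I) Fix D (Tf i)) x -> Fix D T x.
Proof.
case: Mw => Mind _ _ Msum Fx.
have Dx : D x.
  have [t Omt] := has_sum_nonempty Msum (oner_neq0 R).
  have [] := Mind t Omt; case: t {Omt} => [//|j r] _ tI.
  by have [] := Fx j (tI j (mem_head j r)).
split=> //; apply: has_sum_unique (Tdef Dx) _.
rewrite -[X in has_sum _ _ X]scale1r.
apply: (has_sum_ext _ (has_sum_scale x Msum)) => t Omt.
by rewrite string_op_fix // => j jt; have [] := Fx j (Om_indices Omt jt).
Qed.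

(* Conversely, let z be a common fixed point and u = x - z for x = T x.  The
   weighted sum of <T[t]x - z, u> equals <u, u> = |u|^2, each term is at most
   w(t) |u|^2, and the term of a string containing i is strictly smaller if
   T_i moves x; hence T_i x = x. *)
Lemma averaged_fix_common x i : (\bigcap_(j in I) Fix D (Tf j)) !=set0 ->
  Fix D T x -> I i -> Tf i x = x.
Proof.
move=> [z Fz] [Dx Tx] Ii; case: Mw => _ Mfit Mw01 Msum.
have [//|moved] := eqVneq (Tf i x) x; exfalso.
have Dz : D z by have [] := Fz i Ii.
have Tz j : I j -> Tf j z = z by move=> Ij; have [] := Fz j Ij.
have [t0 [Omt0 it0]] := Mfit i Ii.
pose u := x - z; pose a := `|u| ^+ 2.
pose g t := w t * ip (string_op Tf t x - z) u.
have sum_g : has_sum Om (fun t => g t : R^o) a.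
  have hT : has_sum Om (fun t => w t *: string_op Tf t x) x.
    by rewrite -[X in has_sum _ _ X]Tx; exact: Tdef.
  have := has_sum_ip Hip u (has_sum_sub hT (has_sum_scale z Msum)).
  rewrite scale1r ipxx //; apply: has_sum_ext => t _.
  by rewrite -scalerBr ipZl.
have sum_a : has_sum Om (fun t => w t * a : R^o) a.
  by have := has_sum_scale (a : R^o) Msum; rewrite scale1r.
have gap_ge0 t : Om t -> 0 <= w t * a - g t.
  move=> Omt; have [wt0 _] := Mw01 t Omt.
  rewrite -mulrBr mulr_ge0 ?(ltW wt0) //.
  have := string_dist_le Hip TD Tfne Dz Tz Dx (Om_indices Omt).
  have := ip_le_half Hip (string_op Tf t x - z) u; rewrite /a /u; lra.
have gap_t0 : 0 < w t0 * a - g t0.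
  have [wt0 _] := Mw01 t0 Omt0; rewrite -mulrBr mulr_gt0 //.
  have := string_dist_lt Hip TD Tfne Dz Tz Dx (Om_indices Omt0) it0 moved.
  have := ip_le_half Hip (string_op Tf t0 x - z) u; rewrite /a /u; lra.
have := has_sum_ge_term (has_sum_sub sum_a sum_g) gap_ge0 Omt0.
rewrite subrr; lra.
Qed.

End AveragedStrings.

Theorem lemma3 (R : realType) (H : completeNormedModType R) (ip : H -> H -> R)
  (Hip : is_inner_product ip)
  (D : set H) (D0 : D !=set0) (Dcl : closed D) (Dcvx : convex_set_in D)
  (I : set nat) (Ipos : forall i, I i -> (0 < i)%N)
  (Tf : nat -> H -> H)
  (TD : forall i, I i -> forall x, D x -> D (Tf i x))
  (Tfne : forall i, I i -> firmly_nonexpansive ip D (Tf i))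
  (F0 : (\bigcap_(i in I) Fix D (Tf i)) !=set0)
  (Om : set (seq nat)) (w : seq nat -> R) (Mw : M_infty I Om w)
  (T : H -> H)
  (Tdef : forall x, D x -> has_sum Om (fun t => w t *: string_op Tf t x) (T x)) :
  Fix D T = \bigcap_(i in I) Fix D (Tf i).
Proof.
apply/seteqP; split => x; last exact: (common_fix_averaged Mw Tdef).
move=> Fx i Ii; split; first by case: Fx.
exact: (averaged_fix_common Hip TD Tfne Mw Tdef F0 Fx Ii).
Qed.
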